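(* Let $S \subseteq \mathbb{R}^n$ be nonempty, closed and convex, let $F = (F_1,\dots,F_m)^\top \colon S\to\mathbb{R}^m$ be continuous with each $F_i$ $\sigma_i$-convex for some $\sigma_i > 0$, and define $u_0(x) := \sup_{y \in S}\min_{i=1,\dots,m}\{F_i(x) - F_i(y)\}$, $x\in S$. Let $\sigma := \min_i \sigma_i$. Then \[ u_0(x) \ge \frac{\sigma}{2}\inf_{x^\ast\in X^\ast}\|x - x^\ast\|^2 \quad\text{for all } x \in S, \] where $X^\ast$ is the set of Pareto optimal solutions of $\min_{x\in S}F(x)$.
   Context: A function $h\colon S\to\mathbb{R}$ is $\sigma$-convex if $h(\alpha x + (1-\alpha)y) \le \alpha h(x) + (1-\alpha)h(y) - \frac{\alpha(1-\alpha)\sigma}{2}\|x-y\|^2$ for all $x,y\in S$, $\alpha\in[0,1]$. A point $x^\ast\in S$ is Pareto optimal if there is no $x\in S$ with $F_i(x)\le F_i(x^\ast)$ for all $i$ and $F(x)\ne F(x^\ast)$. *)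

From HB Require Import structures.
From mathcomp Require Import all_boot all_order all_algebra.
From mathcomp Require Import all_classical all_reals all_analysis.
Set Implicit Arguments. Unset Strict Implicit. Unset Printing Implicit Defensive.
Import Order.TTheory GRing.Theory Num.Theory.
Import numFieldNormedType.Exports.
Local Open Scope classical_set_scope.
Local Open Scope ring_scope.

Definition sqnorm (R : realType) (n : nat) (v : 'rV[R]_n) : R :=
  \sum_(j < n) (v ord0 j) ^+ 2.

Definition sigma_convex (R : realType) (n : nat) (S : set 'rV[R]_n)
  (h : 'rV[R]_n -> R) (sigma : R) : Prop :=
  forall x y a, S x -> S y -> 0 <= a -> a <= 1 ->
    h (a *: x + (1 - a) *: y) <=
      a * h x + (1 - a) * h y - a * (1 - a) * sigma / 2 * sqnorm (x - y).

Definition pareto_optimal (R : realType) (n m : nat) (S : set 'rV[R]_n)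
  (F : 'I_m -> 'rV[R]_n -> R) (xs : 'rV[R]_n) : Prop :=
  S xs /\ ~ (exists x, S x /\ (forall i, F i x <= F i xs) /\
                       (exists i, F i x != F i xs)).

Definition u0 (R : realType) (n m : nat) (S : set 'rV[R]_n)
  (F : 'I_m -> 'rV[R]_n -> R) (x : 'rV[R]_n) : \bar R :=
  ereal_sup [set (\big[mine/+oo%E]_(i < m) ((F i x - F i y)%:E))%E | y in S].

Definition min_sigma (R : realType) (m : nat) (sigma : 'I_m -> R) : R :=
  fine (\big[mine/+oo%E]_(i < m) (sigma i)%:E)%E.

From HB Require Import structures.
From mathcomp Require Import all_boot all_order all_algebra.
From mathcomp Require Import all_classical all_reals all_analysis.
From mathcomp Require Import ring lra.
Set Implicit Arguments. Unset Strict Implicit. Unset Printing Implicit Defensive.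
Import Order.TTheory GRing.Theory Num.Theory.
Import numFieldNormedType.Exports.
Local Open Scope classical_set_scope.
Local Open Scope ring_scope.

(* Fix x in S and scalarize with phi(y) = max_i (F_i y - F_i x), which is
   sigma-convex and continuous. Strong convexity makes the sublevel set
   {phi <= phi x} bounded, so phi attains its minimum on S at some xs, and
   phi grows quadratically away from xs: phi xs + sigma/2 |y - xs|^2 <= phi y.
   A point dominating xs would not increase phi, so xs is Pareto optimal; and
   y = x gives min_i (F_i x - F_i xs) = - phi xs >= sigma/2 |x - xs|^2, while
   u0 x is at least this minimum. *)

Section SquaredNorm.
Variables (R : realType) (n : nat).
Implicit Types v : 'rV[R]_n.

Lemma sqnorm_ge0 v : 0 <= sqnorm v.
Proof. by rewrite sumr_ge0 // => j _; exact: sqr_ge0. Qed.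

Lemma sqnorm_gt0 v : (0 < sqnorm v) = (v != 0).
Proof.
rewrite lt_def sqnorm_ge0 andbT; congr negb; apply/eqP/eqP => [|->]; last first.
  by rewrite /sqnorm big1 // => j _; rewrite mxE expr0n.
move=> /eqP; rewrite psumr_eq0 => [/allP v0|j _]; last exact: sqr_ge0.
apply/rowP => j; rewrite mxE; apply/eqP.
by rewrite -sqrf_eq0; exact: v0 (mem_index_enum j).
Qed.

Lemma normr_entry_le v j : `|v ord0 j| <= Num.sqrt (sqnorm v).
Proof.
rewrite -sqrtr_sqr ler_sqrt ?sqnorm_ge0 // /sqnorm (bigD1 j) //= lerDl.
by rewrite sumr_ge0 // => i _; exact: sqr_ge0.
Qed.

End SquaredNorm.

Definition cube (R : realType) (n : nat) (c : 'rV[R]_n) (r : R) : set 'rV[R]_n :=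
  [set v | forall j, `|v ord0 j - c ord0 j| <= r].

Lemma cube_compact (R : realType) (n : nat) (c : 'rV[R]_n) (r : R) :
  compact (cube c r).
Proof.
have -> : cube c r = [set v | forall j,
    `[c ord0 j - r, c ord0 j + r]%classic (v ord0 j)].
  by apply/seteqP; split => v /= vc j; have := vc j; rewrite ler_distl in_itv.
apply: (@rV_compact _ _ (fun j => `[c ord0 j - r, c ord0 j + r]%classic)).
by move=> j; exact: segment_compact.
Qed.

Lemma cube_center (R : realType) (n : nat) (c : 'rV[R]_n) (r : R) :
  0 <= r -> cube c r c.
Proof. by move=> r0 j; rewrite subrr normr0. Qed.

Lemma convex_set_comb (R : realType) (n : nat) (S : set 'rV[R]_n) :
  convex_set S -> forall y w a, S y -> S w -> 0 <= a -> a <= 1 ->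
  S (a *: y + (1 - a) *: w).
Proof.
move=> cvxS y w a Sy Sw a0 a1.
by have := cvxS y w (Itv01 a0 a1) (mem_set Sy) (mem_set Sw); rewrite inE.
Qed.

Lemma le0_of_le_mul01 (R : realFieldType) (d c : R) :
  (forall a, 0 < a -> a <= 1 -> d <= a * c) -> d <= 0.
Proof.
move=> dc; rewrite leNgt; apply/negP => d0.
have c0 : 0 < c by have := dc 1 ltr01 (lexx _); lra.
have a0 : 0 < d / (2 * c) by rewrite divr_gt0 // mulr_gt0.
have a1 : d / (2 * c) <= 1.
  by have := dc 1 ltr01 (lexx _); rewrite ler_pdivrMr ?mulr_gt0 //; lra.
have := dc _ a0 a1.
have -> : d / (2 * c) * c = d / 2 by field; rewrite gt_eqF.
lra.
Qed.

Lemma continuous_bigmax (T : topologicalType) (R : realType) (I : Type)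
    (s : seq I) (h : T -> R) (g : I -> T -> R) :
  continuous h -> (forall i, continuous (g i)) ->
  continuous (fun y => \big[Num.max/h y]_(i <- s) g i y).
Proof.
move=> h_cont g_cont; elim: s => [|i s IHs].
  by under eq_fun do rewrite big_nil.
under eq_fun do rewrite big_cons.
by move=> y; apply: continuous_max; [exact: g_cont | exact: IHs].
Qed.

Section SigmaConvex.
Variables (R : realType) (n : nat) (S : set 'rV[R]_n).
Implicit Types (h : 'rV[R]_n -> R) (s : R).

Lemma sigma_convexW h s s' :
  s' <= s -> sigma_convex S h s -> sigma_convex S h s'.
Proof.
move=> s's hcvx x y a Sx Sy a0 a1; apply: le_trans (hcvx x y a Sx Sy a0 a1) _.
rewrite lerD2l lerN2 -!mulrA ler_wpM2l // ler_wpM2l ?subr_ge0 //.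
by rewrite !mulrA ler_wpM2r ?sqnorm_ge0 // ler_wpM2r.
Qed.

Lemma sigma_convexBr h s c :
  sigma_convex S h s -> sigma_convex S (fun y => h y - c) s.
Proof. by move=> hcvx x y a Sx Sy a0 a1; have := hcvx x y a Sx Sy a0 a1; lra. Qed.

Lemma sigma_convex_bigmax (I : finType) (i0 : I) (h : I -> 'rV[R]_n -> R) s :
  (forall i, sigma_convex S (h i) s) ->
  sigma_convex S (fun y => \big[Num.max/h i0 y]_i h i y) s.
Proof.
move=> hcvx x y a Sx Sy a0 a1.
suff hi i : h i (a *: x + (1 - a) *: y) <=
    a * \big[Num.max/h i0 x]_i h i x + (1 - a) * \big[Num.max/h i0 y]_i h i y
    - a * (1 - a) * s / 2 * sqnorm (x - y).
  by apply: bigmax_le => [|i _]; exact: hi.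
apply: le_trans (hcvx i x y a Sx Sy a0 a1) _.
by rewrite lerD2r lerD // ler_wpM2l ?subr_ge0 //; exact: le_bigmax.
Qed.

Hypothesis cvxS : convex_set S.

(* Compare xs with a y + (1 - a) xs and let a -> 0. *)
Lemma sigma_convex_min_growth h s xs :
  0 <= s -> sigma_convex S h s -> S xs -> (forall y, S y -> h xs <= h y) ->
  forall y, S y -> h xs + s / 2 * sqnorm (y - xs) <= h y.
Proof.
move=> s0 hcvx Sxs xs_min y Sy.
set c := s / 2 * sqnorm (y - xs).
suff : h xs - h y + c <= 0 by lra.
apply: (le0_of_le_mul01 (c := c)) => a a0 a1.
rewrite -(ler_pM2l a0) -subr_le0.
have := xs_min _ (convex_set_comb cvxS Sy Sxs (ltW a0) a1).
have := hcvx y xs a Sy Sxs (ltW a0) a1.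
have -> : a * (1 - a) * s / 2 * sqnorm (y - xs) = a * (1 - a) * c.
  by rewrite /c; ring.
move=> h_comb h_min.
have -> : a * (h xs - h y + c) - a * (a * c) =
    h xs - (a * h y + (1 - a) * h xs - a * (1 - a) * c) by ring.
by rewrite subr_le0; exact: le_trans h_min h_comb.
Qed.

(* The point z at distance 1 from x on the segment [x, y] has
   h z <= h x - (|y - x| - 1) s / 2. *)
Lemma sigma_convex_sublevel_bound h s x hmin :
  0 < s -> sigma_convex S h s -> S x ->
  (forall z, S z -> cube x 1 z -> hmin <= h z) ->
  forall y, S y -> h y <= h x ->
  Num.sqrt (sqnorm (y - x)) <= 1 + 2 * (h x - hmin) / s.
Proof.
move=> s0 hcvx Sx hmin_le y Sy hyx.
set t := Num.sqrt (sqnorm (y - x)).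
have hmin_x : hmin <= h x by apply: hmin_le => //; exact: cube_center.
have [t1|t1] := leP t 1.
  by apply: le_trans t1 _; rewrite lerDl divr_ge0 ?mulr_ge0 ?subr_ge0 // ltW.
have t0 : 0 < t by lra.
set a := t^-1.
have a0 : 0 <= a by rewrite invr_ge0 ltW.
have a1 : a <= 1 by rewrite invf_le1 // ltW.
have Sz := convex_set_comb cvxS Sy Sx a0 a1.
have z_cube : cube x 1 (a *: y + (1 - a) *: x).
  move=> j; rewrite !mxE.
  have -> : a * y ord0 j + (1 - a) * x ord0 j - x ord0 j =
            a * (y ord0 j - x ord0 j) by ring.
  rewrite normrM ger0_norm // -(mulVf (lt0r_neq0 t0)) ler_wpM2l //.
  by have := normr_entry_le (y - x) j; rewrite !mxE.
have gain : (t - 1) * (s / 2) <= h x - hmin.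
  have := hmin_le _ Sz z_cube.
  have := hcvx y x a Sy Sx a0 a1.
  have -> : a * (1 - a) * s / 2 * sqnorm (y - x) = (t - 1) * (s / 2).
    by rewrite -[sqnorm _]sqr_sqrtr ?sqnorm_ge0 // -/t /a; field; rewrite gt_eqF.
  have := ler_wpM2l a0 hyx; lra.
by rewrite -lerBlDl ler_pdivlMr //; lra.
Qed.

Hypothesis clS : closed S.

Lemma sigma_convex_attains_min h s x :
  0 < s -> sigma_convex S h s -> {within S, continuous h} -> S x ->
  exists2 xs, S xs & forall y, S y -> h xs <= h y.
Proof.
move=> s0 hcvx h_cont Sx.
have min_on_cube r : 0 <= r ->
    exists2 c, (cube x r `&` S) c & forall z, S z -> cube x r z -> h c <= h z.
  move=> r0; have [c /set_mem cSr c_min] := compact_EVT_min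
    (ex_intro _ x (conj (cube_center x r0) Sx))
    (compact_closedI (@cube_compact _ _ x r) clS)
    (continuous_subspaceW (@subIsetr _ _ _) h_cont).
  by exists c => // z Sz zr; apply: c_min; rewrite inE.
have [c1 _ c1_min] := min_on_cube 1 ler01.
set D := 1 + 2 * (h x - h c1) / s.
have c1x : h c1 <= h x by apply: c1_min => //; exact: cube_center.
have D0 : 0 <= D by rewrite addr_ge0 // divr_ge0 ?mulr_ge0 ?subr_ge0 // ltW.
have [xs [_ Sxs] xs_min] := min_on_cube D D0.
exists xs => // y Sy; have [hyx|hxy] := leP (h y) (h x).
  apply: xs_min => // j; have := normr_entry_le (y - x) j; rewrite !mxE.
  by move/le_trans; apply; exact: sigma_convex_sublevel_bound.
have := xs_min x Sx (cube_center x D0); lra.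
Qed.

End SigmaConvex.

Section MinSigma.
Variables (R : realType) (m : nat) (sigma : 'I_m -> R).

Let min_sigma_attained (i : 'I_m) :
  exists j, (\big[mine/+oo%E]_(k < m) (sigma k)%:E)%E = (sigma j)%:E.
Proof.
have [j _ ->] := eq_bigmin (x := +oo%E) i predT (fun k => (sigma k)%:E) isT
  (fun k _ => leey _).
by exists j.
Qed.

Lemma min_sigma_le i : min_sigma sigma <= sigma i.
Proof.
have [j e] := min_sigma_attained i.
by rewrite /min_sigma e /= -lee_fin -e; exact: bigmin_le.
Qed.

Lemma min_sigma_gt0 (i : 'I_m) : (forall i, 0 < sigma i) -> 0 < min_sigma sigma.
Proof.
move=> sigma_gt0; have [j e] := min_sigma_attained i.
by rewrite /min_sigma e; exact: sigma_gt0.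
Qed.

End MinSigma.

Section MaxIncrease.
Variables (R : realType) (n m : nat) (F : 'I_m -> 'rV[R]_n -> R) (i0 : 'I_m).
Implicit Types (S : set 'rV[R]_n) (x y : 'rV[R]_n).

(* The seed i0 of the fold only makes the maximum of a nonempty family
   well defined; the value does not depend on it. *)
Definition max_increase x y : R := \big[Num.max/F i0 y - F i0 x]_i (F i y - F i x).

Lemma max_increase_ge x y i : F i y - F i x <= max_increase x y.
Proof. exact: le_bigmax. Qed.

Lemma max_increase_le x y c :
  (forall i, F i y - F i x <= c) -> max_increase x y <= c.
Proof. by move=> Fc; apply: bigmax_le => // i _. Qed.

Lemma max_increase_id x : max_increase x x = 0.
Proof.
apply/eqP; rewrite eq_le max_increase_le => [|i]; last by rewrite subrr.
by have := max_increase_ge x x i0; rewrite subrr.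
Qed.

Lemma sigma_convex_max_increase S s x :
  (forall i, sigma_convex S (F i) s) -> sigma_convex S (max_increase x) s.
Proof.
by move=> Fcvx; apply: sigma_convex_bigmax => i; exact: sigma_convexBr.
Qed.

Lemma continuous_max_increase S x :
  (forall i, {within S, continuous (F i)}) ->
  {within S, continuous (max_increase x)}.
Proof.
move=> Fcont; have Fx_cont i : {within S, continuous (fun y => F i y - F i x)}.
  by move=> y; apply: cvgB; [exact: Fcont | exact: cvg_cst].
exact: (@continuous_bigmax (subspace S) R _ _ _ _ (Fx_cont i0) Fx_cont).
Qed.

Lemma pareto_optimal_strict_min_max_increase S x xs :
  S xs -> (forall y, S y -> y != xs -> max_increase x xs < max_increase x y) ->
  pareto_optimal S F xs.
Proof.
move=> Sxs xs_min; split=> // -[y [Sy [Fyxs [j Fj]]]].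
have yxs : y != xs by apply: contraNneq Fj => ->.
have := xs_min y Sy yxs; rewrite ltNge => /negP; apply.
apply: max_increase_le => i; apply: le_trans (max_increase_ge _ _ i).
by rewrite lerD2r.
Qed.

End MaxIncrease.

Lemma le_u0 (R : realType) (n m : nat) (S : set 'rV[R]_n)
    (F : 'I_m -> 'rV[R]_n -> R) x y c :
  S y -> (forall i, c <= F i x - F i y) -> (c%:E <= u0 S F x)%E.
Proof.
move=> Sy cF; apply: le_trans (ereal_sup_ubound _) => /=; last by exists y.
by apply: le_bigmin => [|i _]; rewrite ?leey ?lee_fin.
Qed.

Theorem corollary6p3 (R : realType) (n m : nat) (S : set 'rV[R]_n)
  (F : 'I_m -> 'rV[R]_n -> R) (sigma : 'I_m -> R) :
  (0 < m)%N ->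
  S !=set0 -> closed S -> convex_set S ->
  (forall i, {within S, continuous (F i)}) ->
  (forall i, 0 < sigma i) ->
  (forall i, sigma_convex S (F i) (sigma i)) ->
  forall x, S x ->
    ((min_sigma sigma / 2)%:E *
       ereal_inf [set (sqnorm (x - xs))%:E | xs in pareto_optimal S F] <=
     u0 S F x)%E.
Proof.
move=> m_gt0 _ clS cvxS F_cont sigma_gt0 F_cvx x Sx.
pose i0 := Ordinal m_gt0; pose phi := max_increase F i0 x.
set s := min_sigma sigma.
have s_gt0 : 0 < s := min_sigma_gt0 i0 sigma_gt0.
have phi_cvx : sigma_convex S phi s.
  apply: sigma_convex_max_increase => i.
  exact: sigma_convexW (min_sigma_le sigma i) (F_cvx i).
have [xs Sxs xs_min] := sigma_convex_attains_min cvxS clS s_gt0 phi_cvx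
  (continuous_max_increase F_cont) Sx.
have growth := sigma_convex_min_growth cvxS (ltW s_gt0) phi_cvx Sxs xs_min.
have xs_pareto : pareto_optimal S F xs.
  apply: (pareto_optimal_strict_min_max_increase (x := x) Sxs) => y Sy yxs.
  apply: lt_le_trans (growth y Sy); rewrite ltrDl mulr_gt0 ?divr_gt0 //.
  by rewrite sqnorm_gt0 subr_eq0.
have gap i : s / 2 * sqnorm (x - xs) <= F i x - F i xs.
  have := growth x Sx; rewrite /phi max_increase_id.
  have := max_increase_ge F i0 x xs i; lra.
apply: le_trans (le_u0 Sxs gap).
rewrite (EFinM (s / 2)); apply: lee_wpmul2l; first by rewrite lee_fin divr_ge0 // ltW.
by apply: ereal_inf_lbound; exists xs.
Qed.
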